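(* Let $N,\beta,\mu,\gamma>0$ with $\frac{\beta N}{\mu+\gamma}>1$ and $*:=N-\frac{\mu+\gamma}{\beta}$. For $a,b\in(0,N)$ define $$V(a,b)=\inf_{t>0}\ \inf\Big\{\tfrac12\int_0^t|u(s)|^2ds:\ u\in L^2([0,t]),\ \phi(t)=b,\ \text{where } \phi(s)=a+\int_0^s\phi(\theta)(\beta N-\mu-\gamma-\beta\phi(\theta))d\theta+\int_0^s\phi(\theta)(N-\phi(\theta))u(\theta)d\theta\Big\},$$ and set $\overline{V}_\rho=V( *,\rho)$, $\overline{V}_{-\rho}=V( *,N-\rho)$ for small $\rho>0$. Then $$\lim_{\rho\to0}\overline{V}_\rho=\lim_{\rho\to0}\overline{V}_{-\rho}=\infty.$$
   Context: $V(a,b)$ is the large-deviation quasi-potential (minimal control cost) for moving from $a$ to $b$ for the SDE $dI=I([\beta N-\mu-\gamma-\beta I]dt+\sigma(N-I)dB)$; $*$ is its positive deterministic equilibrium. *)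

From HB Require Import structures.
From mathcomp Require Import all_boot all_order all_algebra.
From mathcomp Require Import all_classical all_reals all_analysis.
Set Implicit Arguments. Unset Strict Implicit. Unset Printing Implicit Defensive.
Import Order.TTheory GRing.Theory Num.Theory.
Import numFieldNormedType.Exports.
Local Open Scope classical_set_scope.
Local Open Scope ring_scope.

Section SIS.
Variable R : realType.
Notation mu := (@lebesgue_measure R).

Definition L2_control (t : R) (u : R -> R) : Prop :=
  measurable_fun `[0%R, t] u /\
  (\int[mu]_(x in `[0%R, t]) ((u x) ^+ 2)%:E < +oo)%E.

Definition controlled_path (N beta muR gamma a t : R) (u phi : R -> R) : Prop :=
  {within `[0%R, t], continuous phi} /\
  forall s, 0 <= s <= t ->
    phi s = a
      + Rintegral mu `[0%R, s]
          (fun th => phi th * (beta * N - muR - gamma - beta * phi th))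
      + Rintegral mu `[0%R, s]
          (fun th => phi th * (N - phi th) * u th).

Definition control_cost (t : R) (u : R -> R) : \bar R :=
  ((2 : R)^-1)%:E * \int[mu]_(x in `[0%R, t]) ((u x) ^+ 2)%:E.

Definition quasi_potential (N beta muR gamma a b : R) : \bar R :=
  ereal_inf [set c | exists t (u phi : R -> R),
     [/\ 0 < t, L2_control t u, controlled_path N beta muR gamma a t u phi,
         phi t = b & c = control_cost t u]].

End SIS.

From HB Require Import structures.
From mathcomp Require Import all_boot all_order all_algebra.
From mathcomp Require Import all_classical all_reals all_analysis.
From mathcomp Require Import measurable_realfun ring lra.
Import Order.TTheory GRing.Theory Num.Theory.
Import numFieldNormedType.Exports.
Set Implicit Arguments. Unset Strict Implicit. Unset Printing Implicit Defensive.
Local Open Scope classical_set_scope.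
Local Open Scope ring_scope.

(* Along an admissible path phi' = h with h = beta phi (I* - phi) + phi (N - phi) u.
   Completing the square in u shows that while 0 <= phi <= x <= I*/2 one has
   u^2 >= -(2m/x) h with m = beta I*/N^2, so a stretch on which phi falls from x to
   x/2 costs at least m. A path from I* down to rho <= I*/2^(n+1) crosses n such
   dyadic bands, hence V(I*, rho) >= n m/2, which is unbounded as rho -> 0. Near N
   the same argument applies to N - phi, with m = beta/N. *)

Section crossing_times.
Variable R : realType.
Implicit Types (p : R -> R) (a b c : R).

Lemma subset_itvcc a b c d : c <= a -> b <= d -> `[a, b] `<=` `[c, d].
Proof. by move=> ca bd y /=; rewrite !in_itv /= => /andP[? ?]; apply/andP; lra. Qed.

Lemma subset_itvoc_itvcc a b c d : c <= a -> b <= d -> `]a, b] `<=` `[c, d].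
Proof. by move=> ca bd y /=; rewrite !in_itv /= => /andP[? ?]; apply/andP; lra. Qed.

Lemma within_itvcc_continuous_dist p a b x e :
  {within `[a, b], continuous p} -> a <= x <= b -> 0 < e ->
  exists2 d, 0 < d & forall y, a <= y <= b -> `|x - y| < d -> `|p x - p y| < e.
Proof.
move=> cp xab e0.
have /cvgrPdist_lt /(_ e e0) := (proj1 (subspace_continuousP _ _) cp) x xab.
rewrite near_withinE => /nbhs_ballP[d /= d0 near_x].
by exists d => // y yab xy; apply: near_x; rewrite /ball /= ?in_itv.
Qed.

Lemma last_crossing p a b c : a <= b -> {within `[a, b], continuous p} ->
  c <= p a -> p b < c ->
  exists r, [/\ a <= r <= b, p r = c & forall s, r < s <= b -> p s < c].
Proof.
move=> ab cp ca cb.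
pose S := [set s | a <= s <= b /\ c <= p s].
have hS : has_sup S by split; [exists a; split => //; lra | exists b => y [] /andP[]].
pose r := sup S.
have ar : a <= r by apply: sup_upper_bound => //; split => //; lra.
have rb : r <= b by apply: ge_sup => [|y [/andP[]]] //; exists a; split => //; lra.
have after s : r < s <= b -> p s < c.
  move=> /andP[rs sb]; rewrite ltNge; apply/negP => cs.
  suff : s <= r by lra.
  by apply: sup_upper_bound => //; split => //; lra.
have cr : c <= p r.
  rewrite leNgt; apply/negP => prc.
  have [d d0 Hd] := @within_itvcc_continuous_dist p a b r (c - p r) cp
    ltac:(lra) ltac:(lra).
  have [s Ss sr] := sup_adherent d0 hS.
  have sr' : s <= r by apply: sup_upper_bound.
  case: Ss => /andP[as_ sb] cs.
  have := Hd s ltac:(lra); rewrite ger0_norm ?subr_ge0 //.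
  by move=> /(_ ltac:(rewrite /r; lra)); rewrite ltr_norml => /andP[]; lra.
have [s] : exists2 s, s \in `[r, b] & p s = c.
  apply: IVT => //; first by apply: continuous_subspaceW cp; apply: subset_itvcc.
  by rewrite ge_min le_max; apply/andP; split; apply/orP; [right | left]; lra.
rewrite in_itv /= => /andP[rs sb] ps.
exists r; split => //; first lra.
case: (ltrP r s) => [rs'|sr]; first by have := after s; rewrite ps rs' sb => /(_ isT); lra.
by have -> : r = s by lra.
Qed.

Lemma first_crossing p a b c : a <= b -> {within `[a, b], continuous p} ->
  c < p a -> p b <= c ->
  exists s, [/\ a <= s <= b, p s = c & forall r, a <= r < s -> c < p r].
Proof.
move=> ab cp ca cb.
have cq : {within `[- b, - a], continuous (fun x => - p (- x))}.
  have cpN : {within `[- b, - a], continuous (p \o -%R)}.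
    by apply: within_continuous_compN; rewrite !opprK.
  by move=> x; apply: cvgN; exact: cpN.
have [r [/andP[br ra] qr after]] :=
  @last_crossing (fun x => - p (- x)) (- b) (- a) (- c)
    ltac:(lra) cq ltac:(rewrite /= opprK; lra) ltac:(rewrite /= opprK; lra).
exists (- r); split; [lra | exact: oppr_inj qr | move=> s /andP[as_ sr]].
by have := after (- s) ltac:(lra); rewrite /= opprK; lra.
Qed.

End crossing_times.

Section dyadic_crossing_cost.
Variable R : realType.
Notation mu := (@lebesgue_measure R).
Variables (t x0 m0 : R) (p H u2 : R -> R).
Hypothesis x0_gt0 : 0 < x0.
Hypothesis p_cont : {within `[0, t], continuous p}.
Hypothesis p0_gt : x0 < p 0.
Hypothesis p_increment : forall r s, 0 <= r -> r <= s -> s <= t ->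
  p s - p r = Rintegral mu `]r, s] H.
Hypothesis H_integrable : mu.-integrable `[0, t] (EFin \o H).
Hypothesis u2_integrable : mu.-integrable `[0, t] (EFin \o u2).
Hypothesis u2_ge0 : forall th, 0 <= u2 th.
Hypothesis u2_ge_rate : forall x th, 0 < x -> x <= x0 -> 0 <= p th <= x ->
  - (2 * m0 / x) * H th <= u2 th.

Lemma halving_cost x r s : 0 < x -> x <= x0 -> 0 <= r <= s -> s <= t ->
  p r = x -> p s = x / 2 -> (forall th, r < th <= s -> x / 2 <= p th <= x) ->
  m0 <= Rintegral mu `]r, s] u2.
Proof.
move=> x_gt0 xx0 /andP[r0 rs] st pr ps p_between.
have sub : `]r, s] `<=` `[0, t] by apply: subset_itvoc_itvcc; lra.
have H_int : mu.-integrable `]r, s] (EFin \o H) by exact: integrableS H_integrable.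
have -> : m0 = - (2 * m0 / x) * Rintegral mu `]r, s] H.
  by rewrite -p_increment // ps pr; field; lra.
rewrite -RintegralZl //; apply: le_Rintegral => //.
- exact: integrableZl H_int.
- exact: integrableS u2_integrable.
move=> th /=; rewrite in_itv /= => th_rs.
by apply: u2_ge_rate => //; have := p_between th th_rs; lra.
Qed.

Lemma dyadic_crossing_cost n s : 0 <= s <= t -> p s <= x0 / 2 ^+ n ->
  n%:R * m0 <= Rintegral mu `[0, s] u2.
Proof.
elim: n s => [|n IHn] s /andP[s0 st] ps; first by rewrite mul0r Rintegral_ge0.
set x := x0 / 2 ^+ n.
have x_gt0 : 0 < x by rewrite divr_gt0 // exprn_gt0.
have xx0 : x <= x0.
  rewrite /x ler_pdivrMr ?exprn_gt0 // ler_pMr // exprn_ege1 //; lra.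
have psx : p s <= x / 2 by rewrite /x -mulrA -invfM -exprSr.
have p0x : x / 2 < p 0 by apply: le_lt_trans p0_gt; lra.
have [s' [/andP[s'0 s's] ps' before]] := @first_crossing _ p 0 s (x / 2) s0
  (continuous_subspaceW (subset_itvcc (lexx (0 : R)) st) p_cont) p0x psx.
have p0x' : x <= p 0 by apply: ltW; apply: le_lt_trans p0_gt.
have [r' [/andP[r'0 r's'] pr' after]] := @last_crossing _ p 0 s' x s'0
  (continuous_subspaceW (subset_itvcc (lexx (0 : R)) (le_trans s's st)) p_cont)
  p0x' ltac:(rewrite ps'; lra).
have IHr' : n%:R * m0 <= Rintegral mu `[0, r'] u2.
  by apply: IHn; [apply/andP; split; lra | rewrite pr'].
have mid : m0 <= Rintegral mu `]r', s'] u2.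
  apply: (@halving_cost x) => //; [exact/andP | exact: le_trans st |].
  move=> th /andP[r'th ths']; apply/andP; split; last by rewrite ltW // after // r'th.
  case: (ltrP th s') => [thlt | thge].
    by rewrite ltW // before // thlt andbT ltW // (le_lt_trans r'0 r'th).
  have -> : th = s' by apply/eqP; rewrite eq_le ths' thge.
  by rewrite ps'.
have u2_int b : b <= t -> mu.-integrable `[0, b] (EFin \o u2).
  by move=> bt; apply: integrableS u2_integrable => //; apply: subset_itvcc.
have split_s := @Rintegral_itvB R u2 (BLeft 0) (BRight s) s' (u2_int s st)
  ltac:(by rewrite bnd_simp) ltac:(by rewrite bnd_simp).
have split_s' := @Rintegral_itvB R u2 (BLeft 0) (BRight s') r' (u2_int s' (le_trans s's st))
  ltac:(by rewrite bnd_simp) ltac:(by rewrite bnd_simp).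
have rest : 0 <= Rintegral mu `]s', s] u2 by apply: Rintegral_ge0.
rewrite -natr1 mulrDl mul1r.
by move: IHr' mid rest split_s split_s' => /=; lra.
Qed.

End dyadic_crossing_cost.

Section controlled_paths.
Variable R : realType.
Notation mu := (@lebesgue_measure R).
Implicit Types (t : R) (g u : R -> R).

Lemma L2_control_sqr_integrable t u :
  L2_control t u -> mu.-integrable `[0, t] (EFin \o (fun x => u x ^+ 2)).
Proof.
move=> [mu_ fin]; apply/integrableP; split.
  by apply/measurable_EFinP; exact: measurable_funX.
by under eq_integral => x _ do rewrite /= ger0_norm ?sqr_ge0//.
Qed.

Lemma control_costE t u : L2_control t u ->
  control_cost t u = (2^-1 * Rintegral mu `[0, t] (fun x => u x ^+ 2))%:E.
Proof.
move=> /L2_control_sqr_integrable iu.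
by rewrite /control_cost /Rintegral EFinM fineK //; exact: integrable_fin_num.
Qed.

Lemma within_itvcc_continuous_integrable t g : {within `[0, t], continuous g} ->
  mu.-integrable `[0, t] (EFin \o g).
Proof. by move=> cg; apply: continuous_compact_integrable => //; exact: segment_compact. Qed.

Lemma integrable_mul_L2 t g u : {within `[0, t], continuous g} ->
  measurable_fun `[0, t] u -> mu.-integrable `[0, t] (EFin \o (fun x => u x ^+ 2)) ->
  mu.-integrable `[0, t] (EFin \o (fun x => g x * u x)).
Proof.
move=> cg mu_ iu.
have ig2 : mu.-integrable `[0, t] (EFin \o (fun x => g x ^+ 2)).
  by apply: within_itvcc_continuous_integrable => x; apply: cvgM; exact: cg.
apply: (@le_integrable _ _ _ mu _ _ _ (EFin \o (fun x => g x ^+ 2 + u x ^+ 2))) => //.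
- apply/measurable_EFinP; apply: measurable_funM => //.
  exact: subspace_continuous_measurable_fun.
- move=> x _; rewrite /= lee_fin normrM [X in _ <= X]ger0_norm ?addr_ge0 ?sqr_ge0 //.
  rewrite -[g x ^+ 2]real_normK ?num_real // -[u x ^+ 2]real_normK ?num_real //.
  have := normr_ge0 (g x); have := normr_ge0 (u x).
  by have := sqr_ge0 (`|g x| - `|u x|); nra.
- by apply: eq_integrable (integrableD _ ig2 iu).
Qed.

End controlled_paths.

Section sis_paths.
Variable R : realType.
Notation mu := (@lebesgue_measure R).

Definition sis_rate (N beta muR gamma P U : R) :=
  P * (beta * N - muR - gamma - beta * P) + P * (N - P) * U.

Definition sis_equilibrium (N beta muR gamma : R) := N - (muR + gamma) / beta.

Lemma sis_rateE N beta muR gamma P U : 0 < beta ->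
  sis_rate N beta muR gamma P U =
  beta * P * (sis_equilibrium N beta muR gamma - P) + P * (N - P) * U.
Proof. by move=> beta0; rewrite /sis_rate /sis_equilibrium; field; rewrite lt0r_neq0. Qed.

Variables (N beta muR gamma a t : R) (u phi : R -> R).
Hypothesis t_ge0 : 0 <= t.
Hypothesis u_L2 : L2_control t u.
Hypothesis phi_path : controlled_path N beta muR gamma a t u phi.

Let drift x := phi x * (beta * N - muR - gamma - beta * phi x).
Let noise x := phi x * (N - phi x) * u x.

Lemma controlled_path_start : phi 0 = a.
Proof.
have [_ /(_ 0)] := phi_path; rewrite lexx t_ge0 set_itv1 !Rintegral_set1 => /(_ isT).
by rewrite !addr0.
Qed.

Let phi_cont : {within `[0, t], continuous phi}. Proof. by case: phi_path. Qed.

Let drift_integrable : mu.-integrable `[0, t] (EFin \o drift).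
Proof.
apply: within_itvcc_continuous_integrable => x; apply: cvgM; first exact: phi_cont.
by apply: cvgB; [exact: cvg_cst | apply: cvgMr; exact: phi_cont].
Qed.

Let noise_integrable : mu.-integrable `[0, t] (EFin \o noise).
Proof.
apply: integrable_mul_L2; last exact: L2_control_sqr_integrable.
  move=> x; apply: cvgM; first exact: phi_cont.
  by apply: cvgB; [exact: cvg_cst | exact: phi_cont].
by case: u_L2.
Qed.

Lemma sis_rate_integrable :
  mu.-integrable `[0, t] (EFin \o (fun x => sis_rate N beta muR gamma (phi x) (u x))).
Proof. exact: eq_integrable (integrableD _ drift_integrable noise_integrable). Qed.

Lemma controlled_path_increment r s : 0 <= r -> r <= s -> s <= t ->
  phi s - phi r = Rintegral mu `]r, s] (fun x => sis_rate N beta muR gamma (phi x) (u x)).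
Proof.
move=> r0 rs st.
have [_ phi_eq] := phi_path.
have sub : `[0, s] `<=` `[0, t] by apply: subset_itvcc.
have split f : mu.-integrable `[0, t] (EFin \o f) ->
    Rintegral mu `[0, s] f - Rintegral mu `[0, r] f = Rintegral mu `]r, s] f.
  move=> fint; have fint_s : mu.-integrable `[0, s] (EFin \o f).
    exact: integrableS fint.
  by rewrite (Rintegral_itvB fint_s) // bnd_simp.
have sub' : `]r, s] `<=` `[0, t] by apply: subset_itvoc_itvcc.
rewrite RintegralD //; [|exact: integrableS drift_integrable|exact: integrableS noise_integrable].
rewrite -(split _ drift_integrable) -(split _ noise_integrable).
rewrite (phi_eq s) ?(le_trans r0 rs) // (phi_eq r) ?r0 ?(le_trans rs st) //.
by rewrite /drift /noise; lra.
Qed.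

End sis_paths.

Section cost_bounds.
Variable R : realFieldType.
Implicit Types beta N i P U x : R.

Lemma sqr_ge_affine (L C D U : R) : 0 <= L -> L * C ^+ 2 <= 2 * D ->
  - (2 * L) * (D + C * U) <= U ^+ 2.
Proof.
move=> L0 LCD.
have : 0 <= L * (2 * D - L * C ^+ 2) by rewrite mulr_ge0 // subr_ge0.
have := sqr_ge0 (U + L * C).
have -> : (U + L * C) ^+ 2 = U ^+ 2 + 2 * L * (D + C * U) - L * (2 * D - L * C ^+ 2).
  by ring.
lra.
Qed.

Lemma sqr_ge_logistic_rate_low beta N i P U x : 0 < beta -> i <= N -> 0 < x -> x <= i / 2 ->
  0 <= P <= x ->
  - (2 * (beta * i / N ^+ 2) / x) * (beta * P * (i - P) + P * (N - P) * U) <= U ^+ 2.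
Proof.
move=> beta0 iN x0 xi /andP[P0 Px].
have N0 : 0 < N by lra.
set m0 := beta * i / N ^+ 2.
have m0N : m0 * N ^+ 2 = beta * i by rewrite /m0 divfK // sqrf_eq0 lt0r_neq0.
have L0 : 0 <= m0 / x by rewrite /m0 !divr_ge0 ?mulr_ge0 ?sqr_ge0 //; lra.
have LP : m0 / x * P <= m0 by rewrite -[leRHS](divfK (lt0r_neq0 x0)) ler_wpM2l.
rewrite -mulrA; apply: sqr_ge_affine => //.
have -> : m0 / x * (P * (N - P)) ^+ 2 = (m0 / x * P) * (P * (N - P) ^+ 2) by ring.
have NP : (N - P) ^+ 2 <= N ^+ 2 by rewrite !expr2; nra.
have : m0 / x * P * (P * (N - P) ^+ 2) <= m0 * (P * N ^+ 2).
  exact: ler_pM (mulr_ge0 L0 P0) (mulr_ge0 P0 (sqr_ge0 _)) LP (ler_wpM2l P0 NP).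
rewrite [m0 * (P * _)]mulrCA m0N.
have : 0 <= beta * P * (i - 2 * P) by rewrite !mulr_ge0 //; lra.
nra.
Qed.

Lemma sqr_ge_logistic_rate_high beta N i P U x : 0 < beta -> 0 <= i -> 0 < x ->
  x <= (N - i) / 2 -> 0 <= N - P <= x ->
  - (2 * (beta / N) / x) * - (beta * P * (i - P) + P * (N - P) * U) <= U ^+ 2.
Proof.
move=> beta0 i0 x0 xi /andP[Y0 Yx].
have N0 : 0 < N by lra.
have P0 : 0 <= P by lra.
set m0 := beta / N.
have m0N : m0 * N = beta by rewrite /m0 divfK // lt0r_neq0.
have L0 : 0 <= m0 / x by rewrite /m0 !divr_ge0 //; lra.
have LY : m0 / x * (N - P) <= m0 by rewrite -[leRHS](divfK (lt0r_neq0 x0)) ler_wpM2l.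
have -> : - (2 * m0 / x) * - (beta * P * (i - P) + P * (N - P) * U) =
    - (2 * (m0 / x)) * (beta * P * (P - i) + - (P * (N - P)) * U) by ring.
apply: sqr_ge_affine => //.
have -> : m0 / x * (- (P * (N - P))) ^+ 2 = (m0 / x * (N - P)) * (P * (P * (N - P))).
  by ring.
have : m0 / x * (N - P) * (P * (P * (N - P))) <= m0 * (P * (N * (N - P))).
  apply: ler_pM (mulr_ge0 L0 Y0) _ LY _; first by rewrite !mulr_ge0.
  by apply: ler_wpM2l => //; apply: ler_wpM2r => //; lra.
rewrite [m0 * (P * _)]mulrCA [m0 * (N * _)]mulrA m0N.
have : 0 <= beta * P * (N - i - 2 * (N - P)) by rewrite !mulr_ge0 //; lra.
have : 0 <= beta * P * (N - P) by rewrite !mulr_ge0 //; lra.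
nra.
Qed.

End cost_bounds.

Section quasi_potential_bounds.
Variable R : realType.
Notation mu := (@lebesgue_measure R).
Variables (N beta muR gamma : R).
Hypothesis beta_gt0 : 0 < beta.
Hypothesis muR_gamma_ge0 : 0 <= muR + gamma.
Let istar := sis_equilibrium N beta muR gamma.

Let istar_le : istar <= N.
Proof. by rewrite /istar /sis_equilibrium gerBl divr_ge0 // ltW. Qed.

Lemma quasi_potential_ge_near0 a rho n : 0 < istar -> istar / 2 < a ->
  rho <= istar / 2 / 2 ^+ n ->
  ((n%:R * (beta * istar / N ^+ 2 / 2))%:E <= quasi_potential N beta muR gamma a rho)%E.
Proof.
move=> istar_gt0 a_gt rho_le.
apply: le_ereal_inf_tmp => _ [t [u [phi [t_gt0 u_L2 phi_path phit ->]]]].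
rewrite control_costE // lee_fin.
suff : n%:R * (beta * istar / N ^+ 2) <= Rintegral mu `[0, t] (fun x => u x ^+ 2) by lra.
apply: (dyadic_crossing_cost (x0 := istar / 2) (p := phi)); first lra.
- by case: phi_path.
- by rewrite (controlled_path_start (ltW t_gt0) phi_path).
- exact: controlled_path_increment u_L2 phi_path.
- exact: sis_rate_integrable u_L2 phi_path.
- exact: L2_control_sqr_integrable.
- by move=> th; apply: sqr_ge0.
- move=> x th x_gt0 x_le phi_th; rewrite /= sis_rateE //.
  by apply: sqr_ge_logistic_rate_low => //; have := istar_le; lra.
- by rewrite lexx ltW.
- by rewrite phit.
Qed.

Lemma quasi_potential_ge_nearN a rho n : 0 <= istar -> istar < N ->
  a < N - (N - istar) / 2 -> rho <= (N - istar) / 2 / 2 ^+ n ->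
  ((n%:R * (beta / N / 2))%:E <= quasi_potential N beta muR gamma a (N - rho))%E.
Proof.
move=> istar_ge0 istar_lt a_lt rho_le.
apply: le_ereal_inf_tmp => _ [t [u [phi [t_gt0 u_L2 phi_path phit ->]]]].
rewrite control_costE // lee_fin.
suff : n%:R * (beta / N) <= Rintegral mu `[0, t] (fun x => u x ^+ 2) by lra.
have rate_int := sis_rate_integrable u_L2 phi_path.
apply: (dyadic_crossing_cost (x0 := (N - istar) / 2) (p := fun x => N - phi x)
  (H := fun x => -1 * sis_rate N beta muR gamma (phi x) (u x))); first lra.
- have [phi_cont _] := phi_path.
  by move=> x; apply: cvgB; [exact: cvg_cst | exact: phi_cont].
- by rewrite (controlled_path_start (ltW t_gt0) phi_path); lra.
- move=> r s r0 rs st; rewrite RintegralZl //; last first.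
    by apply: integrableS rate_int => //; apply: subset_itvoc_itvcc.
  by rewrite -(controlled_path_increment u_L2 phi_path) //; lra.
- exact: integrableZl rate_int.
- exact: L2_control_sqr_integrable.
- by move=> th; apply: sqr_ge0.
- move=> x th x_gt0 x_le phi_th; rewrite /= sis_rateE // mulN1r.
  by apply: sqr_ge_logistic_rate_high => //; lra.
- by rewrite lexx ltW.
- by rewrite phit; lra.
Qed.

End quasi_potential_bounds.

Lemma cvgey_dyadic_lower_bound (R : realType) (x0 m0 : R) (V : R -> \bar R) :
  0 < x0 -> 0 < m0 ->
  (forall n rho, rho <= x0 / 2 ^+ n -> ((n%:R * m0)%:E <= V rho)%E) ->
  V rho @[rho --> 0^'+] --> +oo%E.
Proof.
move=> x0_gt0 m0_gt0 V_ge; apply/cvgeyPge => M.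
pose n := Num.Def.archi_bound `|M / m0|.
have Mn : M <= n%:R * m0.
  rewrite -ler_pdivrMr //; apply/ltW/(le_lt_trans (ler_norm _)).
  exact: archi_boundP.
have xn_gt0 : 0 < x0 / 2 ^+ n by rewrite divr_gt0 // exprn_gt0.
near=> rho; apply: le_trans (V_ge n rho _); first by rewrite lee_fin.
by apply/ltW; near: rho; exact: nbhs_right_lt.
Unshelve. all: by end_near.
Qed.

Theorem proposition1 (R : realType) (N beta muR gamma : R) :
  0 < N -> 0 < beta -> 0 < muR -> 0 < gamma ->
  1 < beta * N / (muR + gamma) ->
  let istar := N - (muR + gamma) / beta in
  (quasi_potential N beta muR gamma istar rho @[rho --> 0^'+] --> +oo%E) /\
  (quasi_potential N beta muR gamma istar (N - rho) @[rho --> 0^'+] --> +oo%E).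
Proof.
move=> N_gt0 beta_gt0 muR_gt0 gamma_gt0 R0_gt1 istar.
have c_gt0 : 0 < (muR + gamma) / beta by rewrite divr_gt0 //; lra.
have c_lt : muR + gamma < beta * N by move: R0_gt1; rewrite ltr_pdivlMr ?mul1r //; lra.
have istar_gt0 : 0 < istar by rewrite /istar subr_gt0 ltr_pdivrMr // mulrC.
have istar_lt : istar < N by rewrite /istar; lra.
have istarE : sis_equilibrium N beta muR gamma = istar by [].
split.
- apply: (@cvgey_dyadic_lower_bound _ (istar / 2) (beta * istar / N ^+ 2 / 2)).
  + lra.
  + by rewrite !divr_gt0 ?mulr_gt0 ?exprn_gt0.
  + move=> n rho; apply: quasi_potential_ge_near0; rewrite ?istarE //; lra.
- apply: (@cvgey_dyadic_lower_bound _ ((N - istar) / 2) (beta / N / 2)).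
  + lra.
  + by rewrite !divr_gt0.
  + move=> n rho; apply: quasi_potential_ge_nearN => //; lra.
Qed.
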